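(* Let $I$ be a finite poset whose Hasse digraph $\mathcal H(I)$ is isomorphic to one of the following digraphs $\mathcal F_1,\dots,\mathcal F_7$, where an ''edge'' means an arrow that may be oriented either way. Then $I$ is indefinite. $\mathcal F_1$: vertices $a_1,a_2,b_1,b_2,c$; arrows $a_1\to b_1,a_1\to b_2,a_2\to b_1,a_2\to b_2$; an edge between $a_2$ and $c$. $\mathcal F_2$: vertices $a_1,a_2,b_1,b_2,c$; arrows $a_1\to b_1,a_1\to b_2,a_2\to b_1,a_2\to b_2$; an edge between $b_2$ and $c$. $\mathcal F_3$: a tree with one vertex of degree $3$ whose three arms contain $4$, $3$ and $1$ vertices, all edges oriented arbitrarily ($9$ vertices). $\mathcal F_4$: a tree with one vertex of degree $3$ whose three arms contain $6$, $2$ and $1$ vertices, all edges oriented arbitrarily ($10$ vertices). $\mathcal F_5$: vertices $x_1,\dots,x_8,u,c$; arrows $x_1\to x_2\to\cdots\to x_8$, $x_1\to u$, $u\to x_8$; an edge between $x_8$ and $c$. $\mathcal F_6$: vertices $x_1,\dots,x_8,u,c$; arrows $x_1\to x_2\to\cdots\to x_8$, $x_1\to u$, $u\to x_8$; an edge between $x_1$ and $c$. $\mathcal F_7$: vertices $x_1,\dots,x_8,u_1,u_2$; arrows $x_1\to x_2\to\cdots\to x_8$, $x_1\to u_1\to u_2\to x_8$.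
   Context: For a finite poset $I$ on $\{1,\dots,n\}$: $C_I=[c_{ij}]$ with $c_{ij}=1$ iff $i\preceq_I j$ (else $0$), $G_I=\tfrac12(C_I+C_I^{tr})$; $I$ is indefinite if $G_I$ is neither positive nor negative semi-definite. The Hasse digraph $\mathcal H(I)$ has an arrow $i\to j$ iff $i\prec_I j$ and there is no $k$ with $i\prec_I k\prec_I j$. *)

From HB Require Import structures.
From mathcomp Require Import all_boot all_order all_algebra.
Set Implicit Arguments. Unset Strict Implicit. Unset Printing Implicit Defensive.
Import Order.TTheory GRing.Theory Num.Theory.
Local Open Scope ring_scope.

Definition is_poset (n : nat) (le : rel 'I_n) : Prop :=
  [/\ reflexive le, antisymmetric le & transitive le].

Definition plt (n : nat) (le : rel 'I_n) : rel 'I_n :=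
  fun i j => (i != j) && le i j.

Definition hasse (n : nat) (le : rel 'I_n) : rel 'I_n :=
  fun i j => plt le i j && [forall k, ~~ (plt le i k && plt le k j)].

Definition incmx (R : nzRingType) (n : nat) (le : rel 'I_n) : 'M[R]_n :=
  \matrix_(i, j) (le i j)%:R.

Definition gram (R : fieldType) (n : nat) (le : rel 'I_n) : 'M[R]_n :=
  (2%:R)^-1 *: (incmx R le + (incmx R le)^T).

Definition psd (R : realFieldType) (n : nat) (M : 'M[R]_n) : Prop :=
  forall x : 'cV[R]_n, 0 <= (x^T *m M *m x) 0 0.

Definition nsd (R : realFieldType) (n : nat) (M : 'M[R]_n) : Prop :=
  forall x : 'cV[R]_n, (x^T *m M *m x) 0 0 <= 0.

Definition indefinite (R : realFieldType) (n : nat) (le : rel 'I_n) : Prop :=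
  ~ psd (gram R le) /\ ~ nsd (gram R le).

(* D is an orientation of the "pattern" on vertices 0..m-1 with fixed arrows
   [arrs] and edges [edges] that may be oriented either way: D contains every
   fixed arrow, exactly one orientation of each edge, and nothing else. *)
Definition orientation (m : nat) (arrs edges : seq (nat * nat)) (D : rel 'I_m)
  : Prop :=
  [/\ (forall u v : 'I_m, D u v ->
         [|| (val u, val v) \in arrs, (val u, val v) \in edges
           | (val v, val u) \in edges]),
      (forall u v : 'I_m, (val u, val v) \in arrs -> D u v) &
      (forall u v : 'I_m, (val u, val v) \in edges -> D u v (+) D v u)].

Definition hasse_iso_pattern (n : nat) (le : rel 'I_n)
  (m : nat) (arrs edges : seq (nat * nat)) : Prop :=
  exists (f : 'I_n -> 'I_m) (D : rel 'I_m),
    [/\ bijective f, orientation arrs edges D &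
        forall i j, hasse le i j = D (f i) (f j)].

(* F1, F2: a1=0, a2=1, b1=2, b2=3, c=4 *)
Definition F12_arrs : seq (nat * nat) := [:: (0,2); (0,3); (1,2); (1,3)]%N.
Definition F1_edges : seq (nat * nat) := [:: (1,4)]%N.
Definition F2_edges : seq (nat * nat) := [:: (3,4)]%N.
(* F3: centre 0, arms 1-2-3-4, 5-6-7, 8 *)
Definition F3_edges : seq (nat * nat) :=
  [:: (0,1); (1,2); (2,3); (3,4); (0,5); (5,6); (6,7); (0,8)]%N.
(* F4: centre 0, arms 1-2-3-4-5-6, 7-8, 9 *)
Definition F4_edges : seq (nat * nat) :=
  [:: (0,1); (1,2); (2,3); (3,4); (4,5); (5,6); (0,7); (7,8); (0,9)]%N.
(* F5, F6: x_i = i-1 (0..7), u = 8, c = 9 *)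
Definition chain8 : seq (nat * nat) :=
  [:: (0,1); (1,2); (2,3); (3,4); (4,5); (5,6); (6,7)]%N.
Definition F56_arrs : seq (nat * nat) := chain8 ++ [:: (0,8); (8,7)]%N.
Definition F5_edges : seq (nat * nat) := [:: (7,9)]%N.
Definition F6_edges : seq (nat * nat) := [:: (0,9)]%N.
(* F7: x_i = i-1 (0..7), u1 = 8, u2 = 9 *)
Definition F7_arrs : seq (nat * nat) := chain8 ++ [:: (0,8); (8,9); (9,7)]%N.

From HB Require Import structures.
From mathcomp Require Import all_boot all_order all_algebra.
Import Order.TTheory GRing.Theory Num.Theory.
Set Implicit Arguments. Unset Strict Implicit. Unset Printing Implicit Defensive.
Local Open Scope ring_scope.

(* A finite order is the reflexive-transitive closure of its Hasse digraph, so
   C_I is determined by the orientation of the pattern that H(I) realises.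
   There are finitely many orientations, and for each one an integer vector x
   with x^T C_I x < 0 is checked by computation; on the other hand
   e_i^T G_I e_i = 1 for every vertex i, so G_I is indefinite. *)

Section FinitePoset.
Variables (n : nat) (le : rel 'I_n).
Hypothesis le_poset : is_poset le.

Let le_refl : reflexive le. Proof. by case: le_poset. Qed.
Let le_anti : antisymmetric le. Proof. by case: le_poset. Qed.
Let le_trans : transitive le. Proof. by case: le_poset. Qed.

Lemma pltxx i : plt le i i = false. Proof. by rewrite /plt eqxx. Qed.
Lemma plt_le i j : plt le i j -> le i j. Proof. by case/andP. Qed.

Lemma plt_le_trans i j k : plt le i j -> le j k -> plt le i k.
Proof.
case/andP=> neq_ij le_ij le_jk; rewrite /plt (le_trans le_ij le_jk) andbT.
apply: contraNneq neq_ij => eq_ik; move: le_jk; rewrite -eq_ik => le_ji.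
by apply/eqP/le_anti; rewrite le_ij le_ji.
Qed.

Lemma le_plt_trans i j k : le i j -> plt le j k -> plt le i k.
Proof.
move=> le_ij /andP[neq_jk le_jk]; rewrite /plt (le_trans le_ij le_jk) andbT.
apply: contraNneq neq_jk => eq_ik; move: le_ij; rewrite eq_ik => le_kj.
by apply/eqP/le_anti; rewrite le_jk le_kj.
Qed.

Definition interval_oc i j := [set k | plt le i k && le k j].

Lemma interval_oc_properl i k j :
  le i k -> plt le k j -> interval_oc i k \proper interval_oc i j.
Proof.
move=> le_ik lt_kj; apply/properP; split.
  apply/subsetP=> y; rewrite !inE => /andP[-> le_yk].
  exact: le_trans le_yk (plt_le lt_kj).
exists j; rewrite !inE ?le_refl ?(le_plt_trans le_ik lt_kj) //.
by apply/negP => /andP[_ /(plt_le_trans lt_kj)]; rewrite pltxx.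
Qed.

Lemma interval_oc_properr i c j :
  plt le i c -> le c j -> interval_oc c j \proper interval_oc i j.
Proof.
move=> lt_ic le_cj; apply/properP; split.
  apply/subsetP=> y; rewrite !inE => /andP[lt_cy ->].
  by rewrite (plt_le_trans lt_ic (plt_le lt_cy)).
by exists c; rewrite !inE ?lt_ic ?le_cj ?pltxx.
Qed.

Lemma le_connect_hasse i j : le i j -> connect (hasse le) i j.
Proof.
have [N] := ubnP #|interval_oc i j|.
elim: N i => // N IH i; rewrite ltnS => small_ij le_ij.
have [<-|neq_ij] := eqVneq i j; first exact: connect0.
have lt_ij : plt le i j by rewrite /plt neq_ij.
pose in_ij c := plt le i c && le c j.
have in_ij_j : in_ij j by rewrite /in_ij lt_ij le_refl.
case: (arg_minnP (fun c => #|interval_oc i c|) in_ij_j) => c /andP[lt_ic le_cj] c_min.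
have cover_ic : hasse le i c.
  rewrite /hasse lt_ic; apply/forallP => k; apply/negP => /andP[lt_ik lt_kc].
  have := c_min k; rewrite /in_ij lt_ik (le_trans (plt_le lt_kc) le_cj) => /(_ isT).
  by rewrite leqNgt (proper_card (interval_oc_properl (plt_le lt_ik) lt_kc)).
apply: connect_trans (connect1 cover_ic) (IH c _ le_cj).
exact: leq_trans (proper_card (interval_oc_properr lt_ic le_cj)) small_ij.
Qed.

Lemma hasse_connect_le i j : connect (hasse le) i j -> le i j.
Proof.
case/connectP=> p + ->; elim: p i => [|k p IH] i /=; first by rewrite le_refl.
by case/andP=> /andP[/plt_le le_ik _] /IH; apply: le_trans.
Qed.

Lemma poset_connect_hasse : le =2 connect (hasse le).
Proof. by move=> i j; apply/idP/idP => [/le_connect_hasse|/hasse_connect_le]. Qed.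

End FinitePoset.

Lemma connect_homo (T T' : finType) (f : T -> T') (e : rel T) (e' : rel T') :
  {homo f : x y / e x y >-> e' x y} ->
  {homo f : x y / connect e x y >-> connect e' x y}.
Proof.
move=> fe x y /connectP[p p_path ->]; apply/connectP.
by exists (map f p); [exact: homo_path p_path | rewrite last_map].
Qed.

Lemma connect_bij (T T' : finType) (f : T -> T') (e : rel T) (e' : rel T') :
  bijective f -> (forall x y, e x y = e' (f x) (f y)) ->
  forall x y, connect e x y = connect e' (f x) (f y).
Proof.
case=> g fK gK eE x y; apply/idP/idP; first by apply: connect_homo => ? ?; rewrite eE.
by rewrite -{2}(fK x) -{2}(fK y); apply: connect_homo => a b; rewrite eE !gK.
Qed.

(* Written with [if] rather than [&&] and [||]: [vm_compute] evaluates the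
   arguments of a function call eagerly, and would then explore every walk. *)
Fixpoint reach (E : rel nat) (m k u v : nat) : bool :=
  if u == v then true else if k is k'.+1 then
    has (fun w => if E u w then reach E m k' w v else false) (iota 0 m)
  else false.

Section Reach.
Variables (m : nat) (D : rel 'I_m) (E : rel nat).
Hypothesis DE : forall u v : 'I_m, D u v = E u v.

Lemma reach_connect k (u v : 'I_m) : reach E m k u v -> connect D u v.
Proof.
elim: k u => [|k IH] u /=; case: eqP => [/val_inj -> _|_]; rewrite ?connect0 //.
case/hasP=> w; rewrite mem_iota => /andP[_ lt_wm].
case E_uw: (E u w) => // /(IH (Ordinal lt_wm)).
by apply: connect_trans; apply: connect1; rewrite DE.
Qed.

Lemma path_reach k (u : 'I_m) p :
  path D u p -> (size p <= k)%N -> reach E m k u (last u p).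
Proof.
elim: p k u => [|w p IH] [|k] u //=; rewrite ?eqxx // => /andP[D_uw w_path] size_p.
case: eqP => // _; apply/hasP; exists (val w); first by rewrite mem_iota /=.
by rewrite -DE D_uw IH.
Qed.

Lemma connect_reach (u v : 'I_m) : connect D u v = reach E m m u v.
Proof.
apply/idP/idP; last exact: reach_connect.
case/connectP=> p /shortenP[q q_path q_uniq _] ->.
apply: path_reach q_path _; apply: ltnW.
by have := max_card (mem (u :: q)); rewrite (card_uniqP q_uniq) card_ord.
Qed.

End Reach.

Definition arc_rev (p : nat * nat) : nat * nat := (p.2, p.1).

Fixpoint orientations (edges : seq (nat * nat)) : seq (seq (nat * nat)) :=
  if edges is p :: es then [seq q :: s | q <- [:: p; arc_rev p], s <- orientations es]
  else [:: [::]].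

Lemma orient_in_orientations (d : pred (nat * nat)) edges :
  [seq if d p then p else arc_rev p | p <- edges] \in orientations edges.
Proof.
by elim: edges => //= p es IH; case: (d p); rewrite !mem_cat map_f ?orbT.
Qed.

Section Orientation.
Variables (m : nat) (arrs edges : seq (nat * nat)) (D : rel 'I_m).
Hypothesis D_orient : orientation arrs edges D.

Definition edge_dir (p : nat * nat) : bool :=
  [exists u : 'I_m, exists v : 'I_m, ((val u, val v) == p) && D u v].

Lemma edge_dirE (u v : 'I_m) : edge_dir (val u, val v) = D u v.
Proof.
apply/existsP/idP => [[u' /existsP[v' /andP[/eqP[/val_inj-> /val_inj->] //]]] | D_uv].
by exists u; apply/existsP; exists v; rewrite eqxx.
Qed.

Lemma orientation_arcs (u v : 'I_m) :
  D u v =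
  ((val u, val v) \in arrs ++ [seq if edge_dir p then p else arc_rev p | p <- edges]).
Proof.
case: D_orient => D_sub arrs_D edges_xor; rewrite mem_cat.
apply/idP/orP => [D_uv | [/arrs_D // | /mapP[[a b] ab_edge]]].
  case/or3P: (D_sub u v D_uv) => [|uv_edge|vu_edge]; [by left | right; apply/mapP..].
    by exists (val u, val v); rewrite // edge_dirE D_uv.
  exists (val v, val u); rewrite // edge_dirE.
  by have := edges_xor v u vu_edge; rewrite D_uv addbT => /negbTE->.
case: ifP => dir_ab [ua vb]; subst a b; rewrite edge_dirE in dir_ab => //.
by have /addbP := edges_xor v u ab_edge; rewrite dir_ab.
Qed.

End Orientation.

Section GramForm.
Variables (R : realFieldType) (n : nat) (le : rel 'I_n).

Lemma quad_formE (M : 'M[R]_n) (x : 'cV[R]_n) :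
  (x^T *m M *m x) 0 0 = \sum_i \sum_j x i 0 * x j 0 * M i j.
Proof.
rewrite mxE; under eq_bigr => j _ do rewrite mxE big_distrl /=.
rewrite exchange_big; apply: eq_bigr => i _; apply: eq_bigr => j _.
by rewrite mxE mulrAC.
Qed.

Lemma gram_quad_form (x : 'cV[R]_n) :
  (x^T *m gram R le *m x) 0 0 = (x^T *m incmx R le *m x) 0 0.
Proof.
have trE : x^T *m (incmx R le)^T *m x = (x^T *m incmx R le *m x)^T.
  by rewrite !trmx_mul trmxK mulmxA.
rewrite /gram -scalemxAr -scalemxAl mulmxDr mulmxDl trE.
set q := x^T *m incmx R le *m x.
by rewrite !mxE mulrDr [_^-1 * _]mulrC -splitr.
Qed.

Lemma gram_delta (i : 'I_n) : reflexive le ->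
  let e : 'cV[R]_n := delta_mx i 0 in (e^T *m gram R le *m e) 0 0 = 1.
Proof.
by move=> le_refl e; rewrite gram_quad_form trmx_delta -rowE -colE !mxE le_refl.
Qed.

End GramForm.

Lemma indefinite_of_negative (R : realFieldType) n (le : rel 'I_n) (x : 'cV[R]_n) :
  reflexive le -> (x^T *m gram R le *m x) 0 0 < 0 -> indefinite R le.
Proof.
move=> le_refl x_neg; split=> [/(_ x)|nsd_le]; first by rewrite leNgt x_neg.
case: n le x le_refl x_neg nsd_le => [|n] le x le_refl x_neg nsd_le.
  by move: x_neg; rewrite quad_formE big_ord0 ltxx.
by have := nsd_le (delta_mx ord0 0); rewrite gram_delta // ler10.
Qed.

Definition int_quad_form (m : nat) (L : rel nat) (x : nat -> int) : int :=
  \sum_(0 <= u < m) \sum_(0 <= v < m) x u * x v * (L u v)%:Z.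

Lemma gram_form_bij (R : realFieldType) n m (le : rel 'I_n) (f : 'I_n -> 'I_m)
    (L : rel nat) (x : nat -> int) :
  bijective f -> (forall i j, le i j = L (f i) (f j)) ->
  let y := \col_i ((x (f i))%:~R : R) in
  (y^T *m gram R le *m y) 0 0 = (int_quad_form m L x)%:~R.
Proof.
move=> f_bij leE y.
rewrite gram_quad_form quad_formE /int_quad_form big_mkord rmorph_sum.
rewrite (reindex f) /=; last exact: onW_bij.
apply: eq_bigr => i _; rewrite big_mkord rmorph_sum (reindex f) /=; last exact: onW_bij.
by apply: eq_bigr => j _; rewrite !mxE leE !rmorphM /=; case: (L _ _).
Qed.

Definition negative_on_orientations (m : nat) (arrs edges : seq (nat * nat))
    (w : seq (nat * nat) -> nat -> int) : bool :=
  all (fun s => let a := arrs ++ s in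
         int_quad_form m (reach [rel u v | (u, v) \in a] m m) (w a) < 0)
    (orientations edges).

Lemma pattern_indefinite (R : realFieldType) n (le : rel 'I_n) m arrs edges w :
  is_poset le -> hasse_iso_pattern le m arrs edges ->
  negative_on_orientations m arrs edges w -> indefinite R le.
Proof.
move=> le_poset [f [D [f_bij D_orient hasseE]]] w_neg.
pose s := [seq if edge_dir D p then p else arc_rev p | p <- edges].
pose a := arrs ++ s.
have leE i j : le i j = reach [rel u v | (u, v) \in a] m m (f i) (f j).
  rewrite poset_connect_hasse // (connect_bij f_bij hasseE).
  exact: (connect_reach (E := [rel u v | (u, v) \in a]) (orientation_arcs D_orient)).
apply: (@indefinite_of_negative _ _ _ (\col_i ((w a (f i))%:~R))).
  by case: le_poset.
rewrite (gram_form_bij R (w a) f_bij leE) ltrz0.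
exact: (allP w_neg) s (orient_in_orientations _ _).
Qed.

(* x = (I - A) z for the adjacency matrix A of the oriented pattern.  In F1-F4
   there is at most one directed path between two vertices, so C_I = (I - A)^-1
   and x^T C_I x = sum_u z_u^2 - sum_(u -> v) z_u z_v, whatever the orientation;
   z is a vector on which this form of the underlying graph is negative. *)
Definition hasse_witness (m : nat) (z : seq int) (a : seq (nat * nat)) (u : nat) : int :=
  z`_u - \sum_(0 <= v < m) ((u, v) \in a)%:Z * z`_v.

Lemma F1_negative :
  negative_on_orientations 5 F12_arrs F1_edges (hasse_witness 5 [:: 2; 2; 2; 2; 1]).
Proof.
by rewrite /negative_on_orientations /int_quad_form /hasse_witness !unlock; vm_compute.
Qed.

Lemma F2_negative :
  negative_on_orientations 5 F12_arrs F2_edges (hasse_witness 5 [:: 2; 2; 2; 2; 1]).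
Proof.
by rewrite /negative_on_orientations /int_quad_form /hasse_witness !unlock; vm_compute.
Qed.

Lemma F3_negative : negative_on_orientations 9 [::] F3_edges
  (hasse_witness 9 [:: 8; 6; 4; 2; 1; 6; 4; 2; 4]).
Proof.
by rewrite /negative_on_orientations /int_quad_form /hasse_witness !unlock; vm_compute.
Qed.

Lemma F4_negative : negative_on_orientations 10 [::] F4_edges
  (hasse_witness 10 [:: 12; 10; 8; 6; 4; 2; 1; 8; 4; 6]).
Proof.
by rewrite /negative_on_orientations /int_quad_form /hasse_witness !unlock; vm_compute.
Qed.

Lemma F5_negative : negative_on_orientations 10 F56_arrs F5_edges (fun a => nth 0
  (if (7, 9)%N \in a then [:: 4; -2; -1; -1; -2; -2; -2; 4; -6; 4]
   else [:: 4; -2; -2; -2; -1; -2; -2; 9; -6; -5])).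
Proof. by rewrite /negative_on_orientations /int_quad_form !unlock; vm_compute. Qed.

Lemma F6_negative : negative_on_orientations 10 F56_arrs F6_edges (fun a => nth 0
  (if (0, 9)%N \in a then [:: 8; -2; -2; -2; -2; -2; -1; 5; -6; -4]
   else [:: 4; -2; -1; -1; -2; -2; -2; 4; -6; 4])).
Proof. by rewrite /negative_on_orientations /int_quad_form !unlock; vm_compute. Qed.

Lemma F7_negative : negative_on_orientations 10 F7_arrs [::]
  (fun=> nth 0 [:: 7; -2; -2; -2; -2; -2; -3; 8; -5; -4]).
Proof. by rewrite /negative_on_orientations /int_quad_form !unlock; vm_compute. Qed.

Theorem lemma4p3 (R : realFieldType) (n : nat) (le : rel 'I_n) :
  is_poset le ->
  (hasse_iso_pattern le 5 F12_arrs F1_edges \/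
      hasse_iso_pattern le 5 F12_arrs F2_edges \/
      hasse_iso_pattern le 9 [::] F3_edges \/
      hasse_iso_pattern le 10 [::] F4_edges \/
      hasse_iso_pattern le 10 F56_arrs F5_edges \/
      hasse_iso_pattern le 10 F56_arrs F6_edges \/
      hasse_iso_pattern le 10 F7_arrs [::]) ->
  indefinite R le.
Proof.
move=> le_poset [H|[H|[H|[H|[H|[H|H]]]]]]; apply: (pattern_indefinite _ le_poset H).
- exact: F1_negative.
- exact: F2_negative.
- exact: F3_negative.
- exact: F4_negative.
- exact: F5_negative.
- exact: F6_negative.
- exact: F7_negative.
Qed.
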